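(* Let $\Gamma$ be a finite undirected simple graph with vertices $x_1,\dots,x_n$ and edge set $E$, let $G_\Gamma$ be the associated group with commutator generators $y_1,\dots,y_N$ (notation as in the context). For any $z_1,\dots,z_n,t_1,\dots,t_N\in\mathbb{Z}$, \[h\Big(Z_{G_\Gamma}\Big(\prod_{i=1}^n x_i^{z_i}\prod_{l=1}^N y_l^{t_l}\Big)\Big)\le \min\Big\{n-1,\ \min_{\substack{i\in\{1,\dots,n\}\\ z_i\neq 0}}\deg(x_i)\Big\}+N+1,\] where $Z_{G_\Gamma}(g)$ is the centralizer of $g$, $h$ is the Hirsch number, and the inner minimum over an empty index set is interpreted as $+\infty$.
   Context: For a finite undirected simple graph $\Gamma$ with vertex set $\{x_1,\dots,x_n\}$ and edge set $E$, the group $G_\Gamma$ is defined by the presentation with generators $x_1,\dots,x_n$ and $y_{i,j}$ for each pair $i<j$ with $x_ix_j\notin E$, and relations $[x_j,x_i]=1$ if $x_ix_j\in E$; $[x_j,x_i]=y_{i,j}$ if $x_ix_j\notin E$ and $i<j$; and $[x_l,y_{i,j}]=1$ for all $l$ and all such $y_{i,j}$. Let $N$ be the number of pairs $i<j$ with $x_ix_j\notin E$, and enumerate the $y_{i,j}$ as $y_1,\dots,y_N$. Every element of $G_\Gamma$ is uniquely of the form $x_1^{z_1}\cdots x_n^{z_n}y_1^{t_1}\cdots y_N^{t_N}$. The Hirsch number $h(G)$ of a finitely generated nilpotent group $G$ is the number of infinite cyclic factors in any subnormal series of $G$ with cyclic factors. *)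

From HB Require Import structures.
From mathcomp Require Import all_boot all_order all_algebra.
Set Implicit Arguments. Unset Strict Implicit. Unset Printing Implicit Defensive.
Import Order.TTheory GRing.Theory Num.Theory.
Local Open Scope ring_scope.

Definition simple_graph (n : nat) (e : rel 'I_n) : Prop :=
  (forall i j, e i j = e j i) /\ (forall i, ~~ e i i).

Definition deg (n : nat) (e : rel 'I_n) (i : 'I_n) : nat := #|[set j | e i j]|.

(* index set of the generators y_{i,j}: pairs i<j with x_i x_j not an edge *)
Definition NE (n : nat) (e : rel 'I_n) : Type :=
  {p : 'I_n * 'I_n | (p.1 < p.2)%N && ~~ e p.1 p.2}.
HB.instance Definition _ n e := Finite.on (@NE n e).

Definition Nnonedges (n : nat) (e : rel 'I_n) : nat := #|{: NE e}|.

(* Elements of G_Gamma in normal form x_1^{z_1}...x_n^{z_n} prod y_p^{t_p}. *)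
Definition GG (n : nat) (e : rel 'I_n) : Type :=
  ({ffun 'I_n -> int} * {ffun NE e -> int})%type.

Section Group.
Variables (n : nat) (e : rel 'I_n).

(* Multiplication derived from [x_j,x_i] = x_j^-1 x_i^-1 x_j x_i = y_{i,j}
   (i<j, non-edge), i.e. x_j^a x_i^b = x_i^b x_j^a y_{i,j}^{ab}, y central. *)
Definition gmul (g h : GG e) : GG e :=
  ([ffun i => g.1 i + h.1 i],
   [ffun p : NE e => g.2 p + h.2 p + g.1 (val p).2 * h.1 (val p).1]).

Definition gone : GG e := ([ffun=> 0], [ffun=> 0]).

Definition ginv (g : GG e) : GG e :=
  ([ffun i => - g.1 i],
   [ffun p : NE e => - g.2 p + g.1 (val p).2 * g.1 (val p).1]).

Definition gpown (g : GG e) (m : nat) : GG e := iter m (gmul g) gone.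

Definition gpowz (g : GG e) (k : int) : GG e :=
  match k with
  | Posz m => gpown g m
  | Negz m => ginv (gpown g m.+1)
  end.

Definition subgroup (H : GG e -> Prop) : Prop :=
  [/\ H gone, (forall x y, H x -> H y -> H (gmul x y)) &
      (forall x, H x -> H (ginv x))].

Definition normal_in (K H : GG e -> Prop) : Prop :=
  forall k h, K k -> H h -> K (gmul (ginv h) (gmul k h)).

Definition cyclic_factor (H K : GG e -> Prop) : Prop :=
  exists2 c, H c & forall x, H x -> exists k : int, K (gmul x (ginv (gpowz c k))).

Definition infinite_factor (H K : GG e -> Prop) : Prop :=
  forall s : seq (GG e), exists2 x, H x & forall y, y \in s -> ~ K (gmul x (ginv y)).

Definition cyclic_series (H : GG e -> Prop) (k : nat) (S : nat -> GG e -> Prop) :=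
  [/\ (forall x, S 0%N x <-> H x),
      (forall x, S k x <-> x = gone) &
      (forall i, (i < k)%N ->
         [/\ subgroup (S i), subgroup (S i.+1),
             (forall x, S i.+1 x -> S i x),
             normal_in (S i.+1) (S i) & cyclic_factor (S i) (S i.+1)])].

(* h(H) <= m : every subnormal series of H with cyclic factors has at most m
   infinite (cyclic) factors.  (By the invariance of the Hirsch number this is
   the same as h(H) <= m.)  The boolean labelling f marks the infinite factors. *)
Definition hirsch_le (H : GG e -> Prop) (m : nat) : Prop :=
  forall (k : nat) (S : nat -> GG e -> Prop) (f : nat -> bool),
    cyclic_series H k S ->
    (forall i, (i < k)%N -> (f i <-> infinite_factor (S i) (S i.+1))) ->
    (\sum_(i < k) f i <= m)%N.

Definition centralizer (g : GG e) : GG e -> Prop := fun x => gmul g x = gmul x g.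

End Group.

From HB Require Import structures.
From mathcomp Require Import all_boot all_order all_algebra.
From mathcomp Require Import ring zify boolp.
Import Order.TTheory GRing.Theory Num.Theory.
Set Implicit Arguments. Unset Strict Implicit. Unset Printing Implicit Defensive.
Local Open Scope ring_scope.

(* Let pi : G_Gamma -> Z^n record the exponents of the x_i; its kernel Y is the
   central subgroup of the products of the y_l, identified with Z^N.  For a
   subgroup H put D(H) = dim_Q span pi(H) + dim_Q span (H :&: Y).  If K is
   normal in H with H/K cyclic, generated by cK, and D(K) = D(H), then a
   positive power of c lies in K, so H/K is finite.  Hence each infinite factor
   of a cyclic series of H lowers D, and h(H) <= D(H).  For H = Z(g) the second
   summand is at most N, and if z_i <> 0 then the relations [x_l, x_i] = y_{i,l}
   force h_l z_i = z_l h_i for every h in Z(g) and every non-neighbour x_l of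
   x_i, so pi(Z(g)) lies in the span of pi(g) and of the deg(x_i) coordinate
   vectors of the neighbours of x_i. *)

Section GroupLaws.
Variables (n : nat) (e : rel 'I_n).
Implicit Types (g h c : GG e) (a b : int).

Lemma gmul_x g h i : (gmul g h).1 i = g.1 i + h.1 i.
Proof. by rewrite ffunE. Qed.

Lemma gmul_y g h p : (gmul g h).2 p = g.2 p + h.2 p + g.1 (val p).2 * h.1 (val p).1.
Proof. by rewrite ffunE. Qed.

Lemma ginv_x g i : (ginv g).1 i = - g.1 i.
Proof. by rewrite ffunE. Qed.

Lemma ginv_y g p : (ginv g).2 p = - g.2 p + g.1 (val p).2 * g.1 (val p).1.
Proof. by rewrite ffunE. Qed.

(* The y-coordinates of a power involve k(k-1)/2, so they are compared after
   doubling to stay in int. *)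
Lemma GG_eq_double g h :
  (forall i, g.1 i = h.1 i) -> (forall p, 2 * g.2 p = 2 * h.2 p) -> g = h.
Proof.
case: g h => [x y] [x' y'] /= Ex Ey; congr pair; apply/ffunP => p; first exact: Ex.
exact: (mulfI _ (Ey p)).
Qed.

Lemma gmulA g h c : gmul g (gmul h c) = gmul (gmul g h) c.
Proof. by congr pair; apply/ffunP => p; rewrite !ffunE /=; ring. Qed.

Lemma gmulVg g : gmul (ginv g) g = gone e.
Proof. by congr pair; apply/ffunP => p; rewrite !ffunE /=; ring. Qed.

Lemma gmulg1 g : gmul g (gone e) = g.
Proof. by case: g => x y; congr pair; apply/ffunP => p; rewrite !ffunE /=; ring. Qed.

Definition cross c (p : NE e) : int := c.1 (val p).2 * c.1 (val p).1.

Lemma gpownE c (m : nat) :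
  (forall i, (gpown c m).1 i = m%:Z * c.1 i) /\
  (forall p, 2 * (gpown c m).2 p = 2 * m%:Z * c.2 p + m%:Z * (m%:Z - 1) * cross c p).
Proof.
rewrite /cross; elim: m => [|m [IHx IHy]]; first by split=> *; rewrite ffunE; ring.
rewrite /gpown iterS -/(gpown c m) -[m.+1]addn1 PoszD.
by split=> [i|p]; rewrite (gmul_x, gmul_y) ?mulrDr ?IHx ?IHy; ring.
Qed.

Lemma gpowzE c a :
  (forall i, (gpowz c a).1 i = a * c.1 i) /\
  (forall p, 2 * (gpowz c a).2 p = 2 * a * c.2 p + a * (a - 1) * cross c p).
Proof.
case: a => m; first exact: gpownE.
have [Ex Ey] := gpownE c m.+1; rewrite /cross in Ey *.
change (gpowz c (Negz m)) with (ginv (gpown c m.+1)); rewrite NegzE.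
by split=> [i|p]; rewrite (ginv_x, ginv_y) ?mulrDr ?mulrN ?Ey !Ex; ring.
Qed.

Lemma gpowzD c a b : gmul (gpowz c a) (gpowz c b) = gpowz c (a + b).
Proof.
have [Ax Ay] := gpowzE c a; have [Bx By] := gpowzE c b.
have [Cx Cy] := gpowzE c (a + b).
apply: GG_eq_double => [i|p]; first by rewrite gmul_x Ax Bx Cx; ring.
by rewrite gmul_y Cy !mulrDr Ay By !Ax !Bx /cross; ring.
Qed.

Lemma gpowzN c a : ginv (gpowz c a) = gpowz c (- a).
Proof.
have [Ax Ay] := gpowzE c a; have [Cx Cy] := gpowzE c (- a).
apply: GG_eq_double => [i|p]; first by rewrite ginv_x Ax Cx; ring.
by rewrite ginv_y Cy mulrDr mulrN Ay !Ax /cross; ring.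
Qed.

Lemma gpowzM c a b : gpowz (gpowz c a) b = gpowz c (a * b).
Proof.
have [Ax Ay] := gpowzE c a; have [Bx By] := gpowzE (gpowz c a) b.
have [Cx Cy] := gpowzE c (a * b).
apply: GG_eq_double => [i|p]; first by rewrite Bx Ax Cx mulrA [b * a]mulrC.
by rewrite By Cy [2 * b * _]mulrAC Ay /cross !Ax; ring.
Qed.

Definition inY g := forall i, g.1 i = 0.

Lemma gpowz_mulYg y g a : inY y -> gpowz (gmul y g) a = gmul (gpowz y a) (gpowz g a).
Proof.
move=> y0; have [Ax Ay] := gpowzE (gmul y g) a.
have [Yx Yy] := gpowzE y a; have [Gx Gy] := gpowzE g a.
apply: GG_eq_double => [i|p]; first by rewrite Ax !gmul_x Yx Gx y0; ring.
by rewrite Ay !gmul_y !mulrDr Yy Gy /cross !gmul_x !Yx !y0; ring.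
Qed.

Lemma gpowz_inY y a : inY y -> inY (gpowz y a) /\ forall p, (gpowz y a).2 p = a * y.2 p.
Proof.
move=> y0; have [Yx Yy] := gpowzE y a; split=> [i|p]; first by rewrite Yx y0 mulr0.
by apply: (@mulfI _ 2) => //; rewrite Yy /cross !y0; ring.
Qed.

Lemma subgroup_gpowz (H : GG e -> Prop) c a : subgroup H -> H c -> H (gpowz c a).
Proof.
case=> H1 HM HV Hc; have Hn m : H (gpown c m) by elim: m => //= m; apply: HM.
by case: a => m /=; auto.
Qed.

End GroupLaws.

Section QRank.
Variable k : nat.
Implicit Types (P Q : 'rV[rat]_k -> Prop).

Definition rows_in P r (M : 'M[rat]_(r, k)) := forall i, P (row i M).

Definition qrank P : nat :=
  \max_(d < k.+1 | `[< exists r (M : 'M_(r, k)), rows_in P M /\ \rank M = d >]) d.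

Lemma qrank_ub P r (M : 'M_(r, k)) : rows_in P M -> (\rank M <= qrank P)%N.
Proof.
move=> PM; have ltMk : (\rank M < k.+1)%N by rewrite ltnS rank_leq_col.
apply: (@leq_bigmax_cond _ _ (fun d : 'I_k.+1 => nat_of_ord d) (Ordinal ltMk)).
by apply/asboolP; exists r, M.
Qed.

Lemma qrank_attained P : exists r (M : 'M_(r, k)), rows_in P M /\ \rank M = qrank P.
Proof.
have P0 : `[< exists r (M : 'M_(r, k)), rows_in P M /\ \rank M = @ord0 k >].
  by apply/asboolP; exists 0%N, 0; split; [case | rewrite mxrank0].
rewrite /qrank (bigop.bigmax_eq_arg _ P0).
by case: arg_maxnP => // d /asboolP [r [M [PM <-]]] _; exists r, M.
Qed.

Lemma qrank_le P : (qrank P <= k)%N.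
Proof. by have [r [M [_ <-]]] := qrank_attained P; exact: rank_leq_col. Qed.

Lemma qrankS P Q : (forall v, P v -> Q v) -> (qrank P <= qrank Q)%N.
Proof.
by move=> PQ; have [r [M [PM <-]]] := qrank_attained P; apply: qrank_ub => i; apply: PQ.
Qed.

Lemma qrank_submx P m (W : 'M_(m, k)) :
  (forall v, P v -> (v <= W)%MS) -> (qrank P <= \rank W)%N.
Proof.
move=> PW; have [r [M [PM <-]]] := qrank_attained P.
by apply: mxrankS; apply/row_subP => i; apply: PW.
Qed.

(* A maximal-rank family of rows of P spans every v in Q, or else adjoining v
   would raise the rank of Q above that of P. *)
Lemma qrank_span P Q : (forall v, P v -> Q v) -> (qrank Q <= qrank P)%N ->
  exists r (M : 'M_(r, k)), rows_in P M /\ forall v, Q v -> (v <= M)%MS.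
Proof.
move=> PQ leQP; have [r [M [PM rkM]]] := qrank_attained P.
exists r, M; split=> // v Qv; pose vM := col_mx v M.
have QvM : rows_in Q vM.
  move=> i; rewrite -(splitK i); case: (split i) => j /=.
    by rewrite rowKu (ord1 j) row_id.
  by rewrite rowKd; apply: PQ.
have /andP[_ MvM] : (v <= vM)%MS && (M <= vM)%MS by rewrite -col_mx_sub.
have [_ eqM] := mxrank_leqif_sup MvM.
suff : (vM <= M)%MS by rewrite col_mx_sub => /andP[].
rewrite -eqM eqn_leq (mxrankS MvM) rkM.
exact: leq_trans (qrank_ub QvM) leQP.
Qed.

Definition additive_subgroup P := P 0 /\ forall u v, P u -> P v -> P (u - v).

Section AdditiveSubgroup.
Variable P : 'rV[rat]_k -> Prop.
Hypothesis addP : additive_subgroup P.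

Lemma addsubD u v : P u -> P v -> P (u + v).
Proof.
move=> Pu Pv; have [P0 PB] := addP.
have PNv : P (- v) by rewrite -sub0r; apply: PB.
by rewrite -[v]opprK; apply: PB.
Qed.

Lemma addsub_mulz u (a : int) : P u -> P (u *~ a).
Proof.
move=> Pu; have [P0 PB] := addP.
have Pn m : P (u *+ m) by elim: m => [|m IH]; rewrite ?mulr0n // mulrS; apply: addsubD.
case: a => m; first exact: Pn.
by rewrite NegzE mulrNz -sub0r; apply: PB => //; apply: Pn.
Qed.

Lemma addsub_int_multiple r (M : 'M_(r, k)) v : rows_in P M -> (v <= M)%MS ->
  exists2 a : int, 0 < a & P (a%:~R *: v).
Proof.
move=> PM /submxP [w ->].
exists (\prod_(j < r) denq (w 0 j)); first by apply: prodr_gt0 => j _; exact: denq_gt0.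
rewrite scalemxAl mulmx_sum_row; apply: (big_ind P) => [|u u'|i _].
- by case: addP.
- exact: addsubD.
set a := numq (w 0 i) * \prod_(j < r | j != i) denq (w 0 j).
suff -> : ((\prod_(j < r) denq (w 0 j))%:~R *: w) 0 i = a%:~R :> rat.
  by rewrite scaler_int; apply: addsub_mulz.
rewrite mxE (bigD1 i) //= rmorphM /= mulrC mulrA -numqE /a rmorphM /=; ring.
Qed.

End AdditiveSubgroup.
End QRank.

Section Projections.
Variables (n : nat) (e : rel 'I_n).
Implicit Types (g h y : GG e) (H K : GG e -> Prop) (a : int).

Definition xvec g : 'rV[rat]_n := \row_i (g.1 i)%:~R.
Definition yvec g : 'rV[rat]_(Nnonedges e) := \row_j (g.2 (enum_val j))%:~R.

Definition xpart H (v : 'rV[rat]_n) : Prop := exists2 g, H g & v = xvec g.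
Definition ypart H (v : 'rV[rat]_(Nnonedges e)) : Prop :=
  exists g, [/\ H g, inY g & v = yvec g].

Lemma xpartS H K v : (forall g, K g -> H g) -> xpart K v -> xpart H v.
Proof. by move=> KH [g /KH Hg ->]; exists g. Qed.

Lemma ypartS H K v : (forall g, K g -> H g) -> ypart K v -> ypart H v.
Proof. by move=> KH [g [/KH Hg Yg ->]]; exists g. Qed.

Lemma xvec_mulV g h : xvec (gmul g (ginv h)) = xvec g - xvec h.
Proof. by apply/rowP => i; rewrite !mxE gmul_x ginv_x rmorphB. Qed.

Lemma yvec_mulV g h : inY h -> yvec (gmul g (ginv h)) = yvec g - yvec h.
Proof.
by move=> Yh; apply/rowP => j; rewrite !mxE gmul_y ginv_y ginv_x !Yh !mulr0 !addr0 rmorphB.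
Qed.

Lemma inY_mulV g h : inY g -> inY h -> inY (gmul g (ginv h)).
Proof. by move=> Yg Yh i; rewrite gmul_x ginv_x Yg Yh subrr. Qed.

Lemma xvec_gpowz g a : xvec (gpowz g a) = a%:~R *: xvec g.
Proof.
by apply/rowP => i; have [Ex _] := gpowzE g a; rewrite !mxE Ex rmorphM.
Qed.

Lemma yvec_gpowz y a : inY y -> yvec (gpowz y a) = a%:~R *: yvec y.
Proof.
by move=> Yy; apply/rowP => j; have [_ Ey] := gpowz_inY a Yy; rewrite !mxE Ey rmorphM.
Qed.

Lemma xvec_inj_x g h : xvec g = xvec h -> forall i, g.1 i = h.1 i.
Proof. by move/rowP => Egh i; have := Egh i; rewrite !mxE => /intr_inj. Qed.

Lemma inY_yvec_inj g h : inY g -> inY h -> yvec g = yvec h -> g = h.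
Proof.
case: g h => [x y] [x' y'] Yg Yh /rowP Egh; congr pair; apply/ffunP => p.
  by rewrite (Yg p) (Yh p).
by have := Egh (enum_rank p); rewrite !mxE enum_rankK => /intr_inj.
Qed.

Lemma additive_subgroup_xpart H : subgroup H -> additive_subgroup (xpart H).
Proof.
case=> H1 HM HV; split.
  by exists (gone e) => //; apply/rowP => i; rewrite !mxE ffunE.
move=> _ _ [g Hg ->] [h Hh ->]; rewrite -xvec_mulV.
by exists (gmul g (ginv h)) => //; apply: HM => //; apply: HV.
Qed.

Lemma additive_subgroup_ypart H : subgroup H -> additive_subgroup (ypart H).
Proof.
case=> H1 HM HV; split.
  by exists (gone e); split=> // [i|]; [rewrite ffunE | apply/rowP => j; rewrite !mxE ffunE].
move=> _ _ [g [Hg Yg ->]] [h [Hh Yh ->]]; rewrite -yvec_mulV //.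
exists (gmul g (ginv h)); split=> //; last exact: inY_mulV.
by apply: HM => //; apply: HV.
Qed.

Definition potential H : nat := (qrank (xpart H) + qrank (ypart H))%N.

Lemma potentialS H K : (forall g, K g -> H g) -> (potential K <= potential H)%N.
Proof.
by move=> KH; rewrite leq_add //; apply: qrankS => v; [apply: xpartS | apply: ypartS].
Qed.

End Projections.

Section InfiniteFactors.
Variables (n : nat) (e : rel 'I_n).
Implicit Types (c : GG e) (H K : GG e -> Prop).

(* Equal Q-spans give g1 in K with pi(g1) = pi(c^m), then y = c^m g1^-1 in Y with
   y^m' in K; as y is central, c^(m m') = y^m' g1^m'. *)
Lemma gpowz_in_of_qrank H K c :
    subgroup H -> subgroup K -> (forall g, K g -> H g) ->
    (qrank (xpart H) <= qrank (xpart K))%N -> (qrank (ypart H) <= qrank (ypart K))%N ->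
  H c -> exists2 M : int, 0 < M & K (gpowz c M).
Proof.
move=> sH sK KH leX leY Hc; have [_ HM HV] := sH; have [_ KM _] := sK.
have [r1 [M1 [KM1 spanX]]] := qrank_span (@xpartS _ _ H K ^~ KH) leX.
have [m m_gt0 [g1 Kg1]] := addsub_int_multiple (additive_subgroup_xpart sK) KM1
  (spanX _ (ex_intro2 _ _ c Hc erefl)).
rewrite -xvec_gpowz => /xvec_inj_x Eg1.
pose y := gmul (gpowz c m) (ginv g1).
have Hy : H y by apply: HM; [apply: subgroup_gpowz | apply/HV/KH].
have Yy : inY y by move=> i; rewrite gmul_x ginv_x Eg1 subrr.
have [r2 [M2 [KM2 spanY]]] := qrank_span (@ypartS _ _ H K ^~ KH) leY.
have [m' m'_gt0 [g2 [Kg2 Yg2]]] := addsub_int_multiple (additive_subgroup_ypart sK)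
  KM2 (spanY _ (ex_intro _ y (And3 Hy Yy erefl))).
rewrite -yvec_gpowz // => Eg2; have [Ym' _] := gpowz_inY m' Yy.
have Ky : K (gpowz y m') by rewrite (inY_yvec_inj Ym' Yg2 Eg2).
exists (m * m'); first exact: mulr_gt0.
have -> : gpowz c (m * m') = gpowz (gmul y g1) m' by rewrite -gmulA gmulVg gmulg1 gpowzM.
by rewrite gpowz_mulYg //; apply: KM => //; apply: subgroup_gpowz.
Qed.

Lemma finite_factor_of_gpowz H K c (M : int) : subgroup K ->
    (forall x, H x -> exists k : int, K (gmul x (ginv (gpowz c k)))) ->
    0 < M -> K (gpowz c M) ->
  ~ infinite_factor H K.
Proof.
move=> sK Hcyc M_gt0 KcM Hinf; have [_ KM _] := sK.
have [x Hx Hnot] := Hinf [seq gpowz c r%:Z | r <- iota 0 `|M|%N].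
have [a Ka] := Hcyc x Hx.
set q := (a %/ M)%Z; set r := (a %% M)%Z.
have r_ge0 : 0 <= r by rewrite modz_ge0 // gt_eqF.
apply: (Hnot (gpowz c r)).
  apply/mapP; exists `|r|%N; last by rewrite gez0_abs.
  by rewrite mem_iota add0n -ltz_nat gez0_abs // gtz0_abs // ltz_pmod.
have -> : gmul x (ginv (gpowz c r)) = gmul (gmul x (ginv (gpowz c a))) (gpowz (gpowz c M) q).
  rewrite -gmulA gpowzM !gpowzN gpowzD (divz_eq a M) -/q -/r; congr (gmul x (gpowz c _)).
  ring.
by apply: KM => //; apply: subgroup_gpowz.
Qed.

Lemma potential_drop H K :
    subgroup H -> subgroup K -> (forall g, K g -> H g) ->
    cyclic_factor H K -> infinite_factor H K ->
  (potential K < potential H)%N.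
Proof.
move=> sH sK KH [c Hc Hcyc] Hinf; rewrite ltnNge; apply/negP => leHK.
have leKHx := qrankS (@xpartS _ _ H K ^~ KH); have leKHy := qrankS (@ypartS _ _ H K ^~ KH).
rewrite /potential in leHK.
have leHKx : (qrank (xpart H) <= qrank (xpart K))%N by lia.
have leHKy : (qrank (ypart H) <= qrank (ypart K))%N by lia.
have [M M_gt0 KcM] := gpowz_in_of_qrank sH sK KH leHKx leHKy Hc.
exact: finite_factor_of_gpowz sK Hcyc M_gt0 KcM Hinf.
Qed.

End InfiniteFactors.

Section Centralizer.
Variables (n : nat) (e : rel 'I_n).
Hypothesis He : simple_graph e.
Variables (z : {ffun 'I_n -> int}) (t : {ffun NE e -> int}).
Implicit Type h : GG e.

Lemma centralizer_nonedge h (p : NE e) : centralizer ((z, t) : GG e) h ->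
  z (val p).2 * h.1 (val p).1 = h.1 (val p).2 * z (val p).1.
Proof.
move/(congr1 (fun g : GG e => g.2 p)); rewrite !gmul_y /= [t p + _]addrC.
exact: addrI.
Qed.

Lemma centralizer_nonadj h i l : centralizer ((z, t) : GG e) h ->
  l != i -> ~~ e i l -> h.1 l * z i = z l * h.1 i.
Proof.
move=> Ch; case: (ltngtP i l) => [ltil|ltli|/val_inj->]; last by rewrite eqxx.
- move=> _ nil; have p : ((i, l).1 < (i, l).2)%N && ~~ e (i, l).1 (i, l).2 by rewrite /= ltil.
  by rewrite (centralizer_nonedge (exist _ (i, l) p : NE e) Ch).
- move=> _ nil; have p : ((l, i).1 < (l, i).2)%N && ~~ e (l, i).1 (l, i).2.
    by rewrite /= ltli He.1.
  by rewrite mulrC (centralizer_nonedge (exist _ (l, i) p : NE e) Ch) mulrC.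
Qed.

Lemma qrank_xpart_centralizer i : z i != 0 ->
  (qrank (xpart (centralizer ((z, t) : GG e))) <= (deg e i).+1)%N.
Proof.
move=> zi_neq0; set S := [set j | e i j].
pose vz : 'rV[rat]_n := \row_l (z l)%:~R.
pose B := \matrix_(a < #|S|) ('e_(enum_val a) : 'rV[rat]_n).
apply: leq_trans (qrank_submx (W := (vz + B)%MS) _) _; last first.
  rewrite (leq_trans (mxrank_adds_leqif vz B).1) // -[(deg e i).+1]add1n.
  by rewrite leq_add ?rank_leq_row.
move=> _ [h Ch ->]; pose a : rat := (h.1 i)%:~R / (z i)%:~R.
rewrite -(subrK (a *: vz) (xvec h)) addmx_sub ?scalemx_sub ?addsmxSl //.
apply: submx_trans (addsmxSr vz B); rewrite [X in (X <= _)%MS]row_sum_delta.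
apply: summx_sub => l _; have [lS|lS] := boolP (l \in S).
  rewrite scalemx_sub // -(enum_rankK_in lS lS).
  by rewrite -[X in (X <= _)%MS](rowK (fun a => 'e_(enum_val a))) row_sub.
suff -> : (xvec h - a *: vz) 0 l = 0 by rewrite scale0r sub0mx.
rewrite !mxE /a; have zi_neq0' : (z i)%:~R != 0 :> rat by rewrite intr_eq0.
have [->|l_neq_i] := eqVneq l i; first by rewrite divfK // subrr.
move: lS; rewrite inE => nil; apply/eqP; rewrite subr_eq0 -(inj_eq (mulIf zi_neq0')).
by rewrite mulrAC divfK // -!rmorphM /= (centralizer_nonadj Ch l_neq_i nil) mulrC.
Qed.

End Centralizer.

Lemma sum_le_potential (F D : nat -> nat) k :
  (forall j, (j < k)%N -> (F j + D j.+1 <= D j)%N) -> (\sum_(j < k) F j <= D 0%N)%N.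
Proof.
move=> FD; suff : (\sum_(j < k) F j + D k <= D 0%N)%N by apply: leq_trans; rewrite leq_addr.
elim: k FD => [|k IHk] FD; first by rewrite big_ord0.
rewrite big_ord_recr /= -addnA (leq_trans _ (IHk _)) ?leq_add2l ?FD // => j ltjk.
by apply: FD; apply: ltnW.
Qed.

Lemma qrank_xpart_centralizer_min n (e : rel 'I_n) (He : simple_graph e)
    (z : {ffun 'I_n -> int}) (t : {ffun NE e -> int}) :
  (qrank (xpart (centralizer ((z, t) : GG e)))
     <= \big[minn/n]_(i < n | z i != 0) (deg e i).+1)%N.
Proof.
apply: (big_ind (fun m => qrank (xpart (centralizer ((z, t) : GG e))) <= m)%N).
- exact: qrank_le.
- by move=> a b Ha Hb; rewrite leq_min Ha Hb.
- by move=> i; apply: qrank_xpart_centralizer.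
Qed.

Theorem lemma4p2 (n : nat) (e : rel 'I_n) (He : simple_graph e)
    (z : {ffun 'I_n -> int}) (t : {ffun NE e -> int}) :
  hirsch_le (centralizer ((z, t) : GG e))
    ((\big[minn/n]_(i < n | z i != 0%R) (deg e i).+1) + Nnonedges e)%N.
Proof.
move=> k S f [S0 _ series] f_inf.
apply: leq_trans (@sum_le_potential (fun j => f j) (fun j => potential (S j)) k _) _.
  move=> j ltjk; have [sH sK KH _ cyc] := series j ltjk.
  case fj: (f j); last exact: potentialS.
  by apply: potential_drop => //; apply/(f_inf j ltjk); rewrite fj.
apply: leq_trans (potentialS (fun g => (S0 g).1)) _.
by rewrite leq_add ?qrank_xpart_centralizer_min ?qrank_le.
Qed.
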